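(* The real Lie algebra $\mathfrak g=\mathfrak{sl}(2,\mathbb R)\ltimes\mathbb R^2$ admits no inner product with an orthonormal basis consisting of geodesic elements.
   Context: $\mathfrak{sl}(2,\mathbb R)\ltimes\mathbb R^2$ is the semidirect product in which $\mathfrak{sl}(2,\mathbb R)$ acts on the abelian ideal $\mathbb R^2$ by its canonical linear action; equivalently, it is the Lie algebra of real $3\times3$ matrices of trace zero whose third row is zero, with the commutator bracket. For an inner product $\langle\cdot,\cdot\rangle$ on a real Lie algebra $\mathfrak g$, a nonzero $X\in\mathfrak g$ is a geodesic element if $\langle X,[X,Y]\rangle=0$ for all $Y\in\mathfrak g$. *)

From mathcomp Require Import all_boot all_order all_algebra.
From mathcomp Require Import reals.
Set Implicit Arguments. Unset Strict Implicit. Unset Printing Implicit Defensive.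
Import Order.TTheory GRing.Theory Num.Theory.
Local Open Scope ring_scope.

Section SL2R2.
Variable R : realType.

(* sl(2,R) ⋉ R^2 : real 3x3 matrices of trace zero whose third row is zero. *)
Definition in_g (A : 'M[R]_3) : Prop :=
  \tr A = 0 /\ forall j : 'I_3, A (@Ordinal 3 2 isT) j = 0.

Definition lie (A B : 'M[R]_3) : 'M[R]_3 := A *m B - B *m A.

(* An inner product on g: a symmetric, bilinear, positive definite form on g
   (the values of [ip] outside g are irrelevant). Linearity in the second
   argument follows from linearity in the first and symmetry. *)
Definition is_inner_product (ip : 'M[R]_3 -> 'M[R]_3 -> R) : Prop :=
  [/\ forall (a : R) X Y Z, in_g X -> in_g Y -> in_g Z ->
        ip (a *: X + Y) Z = a * ip X Z + ip Y Z,
      forall X Y, in_g X -> in_g Y -> ip X Y = ip Y X &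
      forall X, in_g X -> X != 0 -> 0 < ip X X].

Definition geodesic (ip : 'M[R]_3 -> 'M[R]_3 -> R) (X : 'M[R]_3) : Prop :=
  [/\ in_g X, X != 0 & forall Y, in_g Y -> ip X (lie X Y) = 0].

Definition orthonormal_basis (ip : 'M[R]_3 -> 'M[R]_3 -> R) (n : nat)
    (e : 'I_n -> 'M[R]_3) : Prop :=
  [/\ forall i, in_g (e i),
      forall i j, ip (e i) (e j) = (i == j)%:R &
      forall X, in_g X -> exists c : 'I_n -> R, X = \sum_(i < n) c i *: e i].

End SL2R2.

From mathcomp Require Import all_boot all_order all_algebra.
From mathcomp Require Import reals ring lra.
Set Implicit Arguments. Unset Strict Implicit. Unset Printing Implicit Defensive.
Import Order.TTheory GRing.Theory Num.Theory.
Local Open Scope ring_scope.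

(* Write X in g as an sl(2) part (a, b, c) plus an R^2 part (v1, v2), and let
   x1, ..., x5 be its inner products with the standard basis E1, ..., E5.
   Testing the geodesic condition against E1, ..., E5 gives five bilinear
   equations.  If X is orthogonal to the ideal R^2 they force (x1, x2, x3) to
   be proportional to the trace-form dual of (a, b, c), with nonzero factor
   tr(X^2); otherwise the sl(2) part is nilpotent and the R^2 part carries
   2/3 of the unit norm of X.  For an orthonormal geodesic basis, summing
   over the basis shows that the second kind occurs exactly three times and
   the first exactly twice.  So some e_j has a nonzero nilpotent sl(2) part
   that is trace-orthogonal to the sl(2) parts of two other basis vectors,
   which are trace-orthogonal and anisotropic; since the trace form of sl(2)
   is nondegenerate, that forces the sl(2) part of e_j to vanish. *)

Definition o0 : 'I_3 := @Ordinal 3 0 isT.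
Definition o1 : 'I_3 := @Ordinal 3 1 isT.
Definition o2 : 'I_3 := @Ordinal 3 2 isT.

Lemma ord3P (P : 'I_3 -> Prop) : P o0 -> P o1 -> P o2 -> forall i, P i.
Proof.
move=> P0 P1 P2 [[|[|[|i]]] lti] //.
- by rewrite (_ : Ordinal lti = o0) //; apply: val_inj.
- by rewrite (_ : Ordinal lti = o1) //; apply: val_inj.
- by rewrite (_ : Ordinal lti = o2) //; apply: val_inj.
Qed.

Lemma big_ord3 (V : nmodType) (F : 'I_3 -> V) : \sum_i F i = F o0 + F o1 + F o2.
Proof.
rewrite !big_ord_recr big_ord0 /= add0r.
by congr (_ + _ + _); congr F; apply: val_inj.
Qed.

Section TraceFormAlgebra.
Variable R : realFieldType.

Lemma geodesic_eqs_orth_ideal (a b c x1 x2 x3 : R) :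
  -2 * b * x2 + 2 * c * x3 = 0 -> -c * x1 + 2 * a * x2 = 0 ->
  b * x1 - 2 * a * x3 = 0 -> a * x1 + b * x2 + c * x3 = 1 ->
  [/\ 2 * a = (2 * a ^+ 2 + 2 * b * c) * x1, c = (2 * a ^+ 2 + 2 * b * c) * x2
    & b = (2 * a ^+ 2 + 2 * b * c) * x3].
Proof.
move=> G1 G2 G3 N.
have mul_eq0 (u w : R) : w = 0 -> u * w = 0 by move->; rewrite mulr0.
have mul_eq (u w : R) : w = 1 -> u * w = u by move->; rewrite mulr1.
have := mul_eq a _ N; have := mul_eq b _ N; have := mul_eq c _ N.
have := mul_eq0 a _ G1; have := mul_eq0 b _ G1; have := mul_eq0 c _ G1.
have := mul_eq0 a _ G2; have := mul_eq0 b _ G2; have := mul_eq0 c _ G2.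
have := mul_eq0 a _ G3; have := mul_eq0 b _ G3; have := mul_eq0 c _ G3.
by move=> *; split; lra.
Qed.

Lemma geodesic_eqs_nilpotent (a b c v1 v2 x1 x2 x3 x4 x5 : R) :
  -2 * b * x2 + 2 * c * x3 - v1 * x4 + v2 * x5 = 0 ->
  -c * x1 + 2 * a * x2 - v2 * x4 = 0 ->
  b * x1 - 2 * a * x3 - v1 * x5 = 0 ->
  a * x4 + c * x5 = 0 -> b * x4 - a * x5 = 0 ->
  (x4, x5) != (0, 0) ->
  a ^+ 2 + b * c = 0 /\ v1 * x4 + v2 * x5 = 2 * (a * x1 + b * x2 + c * x3).
Proof.
move=> G1 G2 G3 G4 G5 x45_neq0.
have mul_eq0 (u w : R) : w = 0 -> u * w = 0 by move->; rewrite mulr0.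
have norm45_neq0 : x4 ^+ 2 + x5 ^+ 2 != 0.
  by rewrite paddr_eq0 ?sqr_ge0 // !sqrf_eq0 -xpair_eqE.
have cancel_norm45 (t : R) : (x4 ^+ 2 + x5 ^+ 2) * t = 0 -> t = 0.
  by move/eqP; rewrite mulf_eq0 (negPf norm45_neq0) => /eqP.
split.
- apply: cancel_norm45.
  have := mul_eq0 (a * x4) _ G4; have := mul_eq0 (c * x4) _ G5.
  have := mul_eq0 (a * x5) _ G5; have := mul_eq0 (b * x5) _ G4.
  by move=> *; lra.
- apply/eqP; rewrite -subr_eq0; apply/eqP; apply: cancel_norm45.
  have := mul_eq0 (x4 ^+ 2 - x5 ^+ 2) _ G1.
  have := mul_eq0 (x4 * x5) _ G2; have := mul_eq0 (x4 * x5) _ G3.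
  have := mul_eq0 (x1 * x5) _ G5; have := mul_eq0 (x1 * x4) _ G4.
  have := mul_eq0 (x2 * x4) _ G5; have := mul_eq0 (x3 * x5) _ G4.
  by move=> *; lra.
Qed.

Lemma trace_form_upper_sqr (a b c p q r : R) :
  2 * a * p + b * r + c * q = 0 -> a ^+ 2 + b * c = 0 ->
  b ^+ 2 * (2 * p ^+ 2 + 2 * q * r) = 2 * (b * p - a * q) ^+ 2.
Proof.
move=> orth iso.
have t1 : b * q * (2 * a * p + b * r + c * q) = 0 by rewrite orth mulr0.
have t2 : q ^+ 2 * (a ^+ 2 + b * c) = 0 by rewrite iso mulr0.
lra.
Qed.

Lemma trace_isotropic_orth_upper_eq0 (a b c p1 q1 r1 p2 q2 r2 : R) :
  2 * a * p1 + b * r1 + c * q1 = 0 -> 2 * a * p2 + b * r2 + c * q2 = 0 ->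
  2 * p1 * p2 + q1 * r2 + r1 * q2 = 0 -> a ^+ 2 + b * c = 0 ->
  2 * p1 ^+ 2 + 2 * q1 * r1 != 0 -> 2 * p2 ^+ 2 + 2 * q2 * r2 != 0 ->
  b = 0.
Proof.
move=> orth1 orth2 orth12 iso aniso1 aniso2.
have b_eq0 (p q r : R) : 2 * a * p + b * r + c * q = 0 ->
    2 * p ^+ 2 + 2 * q * r != 0 -> b * p - a * q = 0 -> b = 0.
  move=> orth aniso vanish; have := trace_form_upper_sqr orth iso.
  rewrite vanish expr0n mulr0 => /eqP; rewrite mulf_eq0 (negPf aniso) orbF.
  by rewrite sqrf_eq0 => /eqP.
have : (b * p1 - a * q1) * (b * p2 - a * q2) = 0.
  have t1 : b * q1 * (2 * a * p2 + b * r2 + c * q2) = 0 by rewrite orth2 mulr0.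
  have t2 : b * q2 * (2 * a * p1 + b * r1 + c * q1) = 0 by rewrite orth1 mulr0.
  have t3 : q1 * q2 * (a ^+ 2 + b * c) = 0 by rewrite iso mulr0.
  have t4 : b ^+ 2 * (2 * p1 * p2 + q1 * r2 + r1 * q2) = 0 by rewrite orth12 mulr0.
  lra.
move/eqP; rewrite mulf_eq0 => /orP [] /eqP.
- exact: b_eq0 orth1 aniso1.
- exact: b_eq0 orth2 aniso2.
Qed.

(* The trace form 2ap + br + cq of sl(2) is nondegenerate, and the two
   anisotropic orthogonal vectors span a nondegenerate plane whose orthogonal
   line contains no nonzero isotropic vector. *)
Lemma trace_isotropic_orth_eq0 (a b c p1 q1 r1 p2 q2 r2 : R) :
  2 * a * p1 + b * r1 + c * q1 = 0 -> 2 * a * p2 + b * r2 + c * q2 = 0 ->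
  2 * p1 * p2 + q1 * r2 + r1 * q2 = 0 -> a ^+ 2 + b * c = 0 ->
  2 * p1 ^+ 2 + 2 * q1 * r1 != 0 -> 2 * p2 ^+ 2 + 2 * q2 * r2 != 0 ->
  [/\ a = 0, b = 0 & c = 0].
Proof.
move=> orth1 orth2 orth12 iso aniso1 aniso2.
have b0 := trace_isotropic_orth_upper_eq0 orth1 orth2 orth12 iso aniso1 aniso2.
have c0 : c = 0.
  apply: (@trace_isotropic_orth_upper_eq0 a c b p1 r1 q1 p2 r2 q2).
  - by rewrite addrAC.
  - by rewrite addrAC.
  - by rewrite addrAC.
  - by rewrite mulrC.
  - by rewrite mulrAC.
  - by rewrite mulrAC.
split=> //; move: iso; rewrite b0 mul0r addr0 => /eqP.
by rewrite sqrf_eq0 => /eqP.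
Qed.

End TraceFormAlgebra.

Section LieAlgebra.
Variable R : realType.
Implicit Types X Y Z : 'M[R]_3.

Lemma mulmx3E X Y i j :
  (X *m Y) i j = X i o0 * Y o0 j + X i o1 * Y o1 j + X i o2 * Y o2 j.
Proof. by rewrite mxE big_ord3. Qed.

Lemma lieE X Y i j :
  lie X Y i j = X i o0 * Y o0 j + X i o1 * Y o1 j + X i o2 * Y o2 j
              - (Y i o0 * X o0 j + Y i o1 * X o1 j + Y i o2 * X o2 j).
Proof. by rewrite /lie -!mulmx3E !mxE. Qed.

Lemma in_gP X : in_g X <->
  [/\ X o1 o1 = - X o0 o0, X o2 o0 = 0, X o2 o1 = 0 & X o2 o2 = 0].
Proof.
rewrite /in_g /mxtrace big_ord3; split.
- move=> [tr0 row2]; have := row2 o0; have := row2 o1; have := row2 o2.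
  rewrite -/o2 => X22 X21 X20; split=> //; lra.
- move=> [X11 X20 X21 X22]; split; first by rewrite X11 X22; lra.
  exact: ord3P.
Qed.

Lemma in_g0 : in_g (0 : 'M[R]_3).
Proof. by apply/in_gP; rewrite !mxE oppr0. Qed.

Lemma in_gZD a X Y : in_g X -> in_g Y -> in_g (a *: X + Y).
Proof.
move=> /in_gP [X11 X20 X21 X22] /in_gP [Y11 Y20 Y21 Y22]; apply/in_gP.
by rewrite !mxE X11 X20 X21 X22 Y11 Y20 Y21 Y22; split; ring.
Qed.

Lemma in_g_lie X Y : in_g X -> in_g Y -> in_g (lie X Y).
Proof.
by move=> /in_gP [? ? ? ?] /in_gP [? ? ? ?]; apply/in_gP; rewrite !lieE; split; nra.
Qed.

Definition E1 : 'M[R]_3 := delta_mx o0 o0 - delta_mx o1 o1.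
Definition E2 : 'M[R]_3 := delta_mx o0 o1.
Definition E3 : 'M[R]_3 := delta_mx o1 o0.
Definition E4 : 'M[R]_3 := delta_mx o0 o2.
Definition E5 : 'M[R]_3 := delta_mx o1 o2.

Lemma in_gE1 : in_g E1. Proof. by apply/in_gP; rewrite !mxE /=; split; lra. Qed.
Lemma in_gE2 : in_g E2. Proof. by apply/in_gP; rewrite !mxE /=; split; lra. Qed.
Lemma in_gE3 : in_g E3. Proof. by apply/in_gP; rewrite !mxE /=; split; lra. Qed.
Lemma in_gE4 : in_g E4. Proof. by apply/in_gP; rewrite !mxE /=; split; lra. Qed.
Lemma in_gE5 : in_g E5. Proof. by apply/in_gP; rewrite !mxE /=; split; lra. Qed.

Lemma in_g_expand X : in_g X ->
  X = X o0 o0 *: E1 + (X o0 o1 *: E2 + (X o1 o0 *: E3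
      + (X o0 o2 *: E4 + X o1 o2 *: E5))).
Proof.
by move=> /in_gP [? ? ? ?]; apply/matrixP; do 2 apply: ord3P; rewrite !mxE /=; lra.
Qed.

Lemma mxtrace_mulmx_g X Y : in_g X -> in_g Y ->
  \tr (X *m Y) = 2 * X o0 o0 * Y o0 o0 + X o0 o1 * Y o1 o0 + X o1 o0 * Y o0 o1.
Proof.
move=> /in_gP [X11 X20 X21 X22] /in_gP [Y11 Y20 Y21 Y22].
rewrite /mxtrace big_ord3 !mulmx3E X11 X20 X21 X22 Y11 Y20 Y21 Y22; ring.
Qed.

Lemma mxtrace_isotropic_orth X Y Z : in_g X -> in_g Y -> in_g Z ->
  \tr (X *m Y) = 0 -> \tr (X *m Z) = 0 -> \tr (Y *m Z) = 0 ->
  \tr (X *m X) = 0 -> \tr (Y *m Y) != 0 -> \tr (Z *m Z) != 0 ->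
  [/\ X o0 o0 = 0, X o0 o1 = 0 & X o1 o0 = 0].
Proof.
move=> gX gY gZ; rewrite !mxtrace_mulmx_g // => XY XZ YZ XX YY ZZ.
apply: (trace_isotropic_orth_eq0 (p1 := Y o0 o0) (q1 := Y o0 o1) (r1 := Y o1 o0)
  (p2 := Z o0 o0) (q2 := Z o0 o1) (r2 := Z o1 o0)); lra.
Qed.

Section InnerProduct.
Variable ip : 'M[R]_3 -> 'M[R]_3 -> R.
Hypothesis ip_inner : is_inner_product ip.

Lemma ipDlZ a X Y Z : in_g X -> in_g Y -> in_g Z ->
  ip (a *: X + Y) Z = a * ip X Z + ip Y Z.
Proof. by case: ip_inner => lin _ _; apply: lin. Qed.

Lemma ipC X Y : in_g X -> in_g Y -> ip X Y = ip Y X.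
Proof. by case: ip_inner => _ sym _; apply: sym. Qed.

Lemma ip0l Z : in_g Z -> ip 0 Z = 0.
Proof.
by move=> gZ; have := ipDlZ 1 in_g0 in_g0 gZ; rewrite scaler0 addr0 mul1r; lra.
Qed.

Lemma ipZl a X Z : in_g X -> in_g Z -> ip (a *: X) Z = a * ip X Z.
Proof. by move=> gX gZ; have := ipDlZ a gX in_g0 gZ; rewrite addr0 ip0l // addr0. Qed.

Lemma ip_expandl Y Z : in_g Y -> in_g Z ->
  ip Y Z = Y o0 o0 * ip E1 Z + Y o0 o1 * ip E2 Z + Y o1 o0 * ip E3 Z
         + Y o0 o2 * ip E4 Z + Y o1 o2 * ip E5 Z.
Proof.
move=> gY gZ; rewrite {1}(in_g_expand gY).
have g5 := in_gZD (Y o1 o2) in_gE5 in_g0; rewrite addr0 in g5.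
have g4 := in_gZD (Y o0 o2) in_gE4 g5.
have g3 := in_gZD (Y o1 o0) in_gE3 g4.
have g2 := in_gZD (Y o0 o1) in_gE2 g3.
rewrite (ipDlZ _ in_gE1 g2 gZ) (ipDlZ _ in_gE2 g3 gZ) (ipDlZ _ in_gE3 g4 gZ).
by rewrite (ipDlZ _ in_gE4 g5 gZ) (ipZl _ in_gE5 gZ); ring.
Qed.

Lemma geodesic_coord_eqs X : geodesic ip X ->
  let a := X o0 o0 in let b := X o0 o1 in let c := X o1 o0 in
  let v1 := X o0 o2 in let v2 := X o1 o2 in
  let x1 := ip E1 X in let x2 := ip E2 X in let x3 := ip E3 X in
  let x4 := ip E4 X in let x5 := ip E5 X in
  [/\ -2 * b * x2 + 2 * c * x3 - v1 * x4 + v2 * x5 = 0,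
      -c * x1 + 2 * a * x2 - v2 * x4 = 0,
      b * x1 - 2 * a * x3 - v1 * x5 = 0,
      a * x4 + c * x5 = 0 & b * x4 - a * x5 = 0].
Proof.
move=> [gX _ geo] a b c v1 v2 x1 x2 x3 x4 x5.
have geo_coord Y : in_g Y -> (lie X Y) o0 o0 * x1 + (lie X Y) o0 o1 * x2
    + (lie X Y) o1 o0 * x3 + (lie X Y) o0 o2 * x4 + (lie X Y) o1 o2 * x5 = 0.
  move=> gY; have gXY := in_g_lie gX gY.
  by rewrite -ip_expandl // ipC ?geo.
have := geo_coord _ in_gE1; have := geo_coord _ in_gE2;
have := geo_coord _ in_gE3; have := geo_coord _ in_gE4;
have := geo_coord _ in_gE5.
case/in_gP: gX => X11 X20 X21 X22.
rewrite !lieE !mxE /= X11 X20 X21 X22 -/a -/b -/c -/v1 -/v2.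
by move=> *; split; lra.
Qed.

Section OrthonormalGeodesicBasis.
Variables (n : nat) (e : 'I_n -> 'M[R]_3).
Hypothesis e_in_g : forall i, in_g (e i).
Hypothesis e_orthonormal : forall i j, ip (e i) (e j) = (i == j)%:R.
Hypothesis e_span :
  forall X, in_g X -> exists c : 'I_n -> R, X = \sum_(i < n) c i *: e i.
Hypothesis e_geodesic : forall i, geodesic ip (e i).

Lemma ip_suml (c : 'I_n -> R) Z : in_g Z ->
  ip (\sum_(i < n) c i *: e i) Z = \sum_(i < n) c i * ip (e i) Z.
Proof.
move=> gZ; pose P S (s : R) := in_g S /\ ip S Z = s.
suff [] : P (\sum_(i < n) c i *: e i) (\sum_(i < n) c i * ip (e i) Z) by [].
apply: (big_rec2 P); first by split; [exact: in_g0 | exact: ip0l].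
by move=> i S s _ [gS <-]; split; [exact: in_gZD | rewrite ipDlZ].
Qed.

Lemma orthonormal_expand Y : in_g Y -> Y = \sum_(i < n) ip Y (e i) *: e i.
Proof.
move=> gY; have [c Yc] := e_span gY.
suff coord j : ip Y (e j) = c j by rewrite {1}Yc; apply: eq_bigr => j _; rewrite coord.
rewrite Yc ip_suml // (bigD1 j) //= e_orthonormal eqxx mulr1 big1 ?addr0 //.
by move=> i /negPf neq_ij; rewrite e_orthonormal neq_ij mulr0.
Qed.

Lemma orthonormal_expand_entry Y k l : in_g Y ->
  Y k l = \sum_(i < n) ip Y (e i) * e i k l.
Proof.
by move=> gY; rewrite {1}(orthonormal_expand gY) summxE; apply: eq_bigr => i _; rewrite mxE.
Qed.

Local Notation A i := (e i o0 o0).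
Local Notation B i := (e i o0 o1).
Local Notation C i := (e i o1 o0).
Local Notation V1 i := (e i o0 o2).
Local Notation V2 i := (e i o1 o2).
Local Notation X1 i := (ip E1 (e i)).
Local Notation X2 i := (ip E2 (e i)).
Local Notation X3 i := (ip E3 (e i)).
Local Notation X4 i := (ip E4 (e i)).
Local Notation X5 i := (ip E5 (e i)).

Lemma ip_basis_expandl i k :
  ip (e k) (e i) = A k * X1 i + B k * X2 i + C k * X3 i + V1 k * X4 i + V2 k * X5 i.
Proof. exact: ip_expandl. Qed.

Lemma basis_norm_expand i :
  A i * X1 i + B i * X2 i + C i * X3 i + V1 i * X4 i + V2 i * X5 i = 1.
Proof. by rewrite -ip_basis_expandl e_orthonormal eqxx. Qed.

Definition orth_ideal i := (X4 i, X5 i) == (0, 0).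

Lemma orth_ideal_mxtrace i k : orth_ideal i ->
  \tr (e i *m e k) = \tr (e i *m e i) * ip (e k) (e i) /\ \tr (e i *m e i) != 0.
Proof.
rewrite /orth_ideal xpair_eqE => /andP [/eqP x4 /eqP x5].
have [+ + + _ _] := geodesic_coord_eqs (e_geodesic i).
rewrite /= x4 x5 !mulr0 !subr0 !addr0 => G1 G2 G3.
have norm := basis_norm_expand i; rewrite x4 x5 !mulr0 !addr0 in norm.
have [k1 k2 k3] := geodesic_eqs_orth_ideal G1 G2 G3 norm.
rewrite ip_basis_expandl x4 x5 !mulr0 !addr0 !mxtrace_mulmx_g //.
have -> : 2 * A i * A i + B i * C i + C i * B i = 2 * A i ^+ 2 + 2 * B i * C i by ring.
set K := 2 * A i ^+ 2 + 2 * B i * C i in k1 k2 k3 *.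
split; first by rewrite !mulrDr !(mulrCA K) -k1 -k2 -k3; ring.
apply/eqP => K0; move: k1 k2 k3 norm; rewrite K0 !mul0r => a0 c0 b0.
have -> : A i = 0 by lra.
by rewrite c0 b0 !mul0r !addr0 => /eqP; rewrite eq_sym oner_eq0.
Qed.

Lemma not_orth_ideal_mxtrace i : ~~ orth_ideal i ->
  [/\ \tr (e i *m e i) = 0, V1 i * X4 i + V2 i * X5 i = 2 / 3
    & (A i, B i, C i) != (0, 0, 0)].
Proof.
move=> x45_neq0; have [G1 G2 G3 G4 G5] := geodesic_coord_eqs (e_geodesic i).
have [iso ideal] := geodesic_eqs_nilpotent G1 G2 G3 G4 G5 x45_neq0.
have norm := basis_norm_expand i.
split.
- by rewrite mxtrace_mulmx_g //; lra.
- by lra.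
- apply/negP => /eqP [a0 b0 c0]; move: ideal norm; rewrite a0 b0 c0; lra.
Qed.


Lemma basis_entry_sums :
  [/\ \sum_(i < n) A i * X1 i = 1, \sum_(i < n) B i * X2 i = 1,
      \sum_(i < n) C i * X3 i = 1, \sum_(i < n) V1 i * X4 i = 1
    & \sum_(i < n) V2 i * X5 i = 1].
Proof.
have entry_sum Y k l : in_g Y -> Y k l = 1 -> \sum_(i < n) e i k l * ip Y (e i) = 1.
  move=> gY Ykl; rewrite -[RHS]Ykl (orthonormal_expand_entry k l gY).
  by apply: eq_bigr => i _; rewrite mulrC.
split.
- by apply: entry_sum in_gE1 _; rewrite !mxE /= subr0.
- by apply: entry_sum in_gE2 _; rewrite !mxE.
- by apply: entry_sum in_gE3 _; rewrite !mxE.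
- by apply: entry_sum in_gE4 _; rewrite !mxE.
- by apply: entry_sum in_gE5 _; rewrite !mxE.
Qed.

Lemma card_basis : n = 5.
Proof.
have [S1 S2 S3 S4 S5] := basis_entry_sums.
apply/eqP; rewrite -(eqr_nat R) -[n in n%:R]card_ord -sumr_const.
rewrite (eq_bigr _ (fun i _ => esym (basis_norm_expand i))) !big_split /=.
by rewrite S1 S2 S3 S4 S5; apply/eqP; lra.
Qed.

Lemma ideal_coord_sum : \sum_(i < n) (V1 i * X4 i + V2 i * X5 i) = 2.
Proof.
have [_ _ _ S4 S5] := basis_entry_sums.
by rewrite big_split /= S4 S5; lra.
Qed.

Lemma card_not_orth_ideal : #|[predC orth_ideal]| = 3.
Proof.
have : \sum_(i < n) (V1 i * X4 i + V2 i * X5 i)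
       = \sum_(i in [predC orth_ideal]) (2 / 3 : R).
  rewrite [RHS]big_mkcond /=; apply: eq_bigr => i _.
  rewrite inE; case: ifP => [/not_orth_ideal_mxtrace [] // | /negbFE].
  by rewrite unfold_in /orth_ideal xpair_eqE => /andP [/eqP -> /eqP ->]; rewrite !mulr0 addr0.
rewrite ideal_coord_sum sumr_const -mulr_natr => card_eq.
by apply/eqP; rewrite -(eqr_nat R); apply/eqP; lra.
Qed.

Lemma card_orth_ideal : #|orth_ideal| = 2.
Proof.
have := cardC orth_ideal; rewrite card_ord card_not_orth_ideal => card_eq.
by apply/eqP; rewrite -(eqn_add2r 3) card_eq card_basis.
Qed.

Lemma no_orthonormal_geodesic_basis : False.
Proof.
have [i1 [i2 [I1 I2 neq12]]] :
    exists i1 i2, [/\ i1 \in orth_ideal, i2 \in orth_ideal & i1 != i2].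
  by apply/card_gt1P; rewrite card_orth_ideal.
have [j J] : exists j, j \in [predC orth_ideal].
  by apply/card_gt0P; rewrite card_not_orth_ideal.
rewrite !inE in I1 I2 J.
have orth x y : x != y -> ip (e y) (e x) = 0.
  by move/negPf => neq_xy; rewrite e_orthonormal eq_sym neq_xy.
have neq1j : i1 != j by apply: contraTneq I1 => ->.
have neq2j : i2 != j by apply: contraTneq I2 => ->.
have [iso _ sl2_neq0] := not_orth_ideal_mxtrace J.
have [tr1j aniso1] := orth_ideal_mxtrace j I1.
have [tr2j aniso2] := orth_ideal_mxtrace j I2.
have [tr12 _] := orth_ideal_mxtrace i2 I1.
rewrite orth ?mulr0 // mxtrace_mulC in tr1j.
rewrite orth ?mulr0 // mxtrace_mulC in tr2j.
rewrite orth ?mulr0 // in tr12.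
have [a0 b0 c0] := mxtrace_isotropic_orth (e_in_g j) (e_in_g i1) (e_in_g i2)
  tr1j tr2j tr12 iso aniso1 aniso2.
by move: sl2_neq0; rewrite a0 b0 c0 eqxx.
Qed.

End OrthonormalGeodesicBasis.
End InnerProduct.
End LieAlgebra.

Theorem proposition8p2 (R : realType) (ip : 'M[R]_3 -> 'M[R]_3 -> R) :
  is_inner_product ip ->
  ~ (exists (n : nat) (e : 'I_n -> 'M[R]_3),
       orthonormal_basis ip e /\ forall i, geodesic ip (e i)).
Proof.
move=> ip_inner [n [e [[e_in_g e_orthonormal e_span] e_geodesic]]].
exact: (no_orthonormal_geodesic_basis ip_inner e_in_g e_orthonormal e_span e_geodesic).
Qed.
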